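(* Under the standing assumptions below, for every $k\in\{0,\dots,n-1\}$: (a) $\prec_k\subseteq\prec_{k+1}$; (b) for all $c,d\in I$, $c\prec_{k+1}d$ implies $c\prec d$ and $\mathrm{var}(c)\setminus X_k\subseteq\mathrm{var}(d)\setminus X_k$; (c) for every $k\in\{0,\dots,n\}$, $\preceq_k$ is a partial order on $I$.
   Context: Standing assumptions: $I$ is a finite set of weighted constraints with default values on a finite domain $D$ such that distinct constraints have distinct variable sets, $\mathcal H(I)=(\mathrm{var}(I),\{\mathrm{var}(c)\mid c\in I\})$ is $\beta$-acyclic, and $(x_1,\dots,x_n)$ is a $\beta$-elimination order of $\mathcal H(I)$ (an enumeration of $\mathrm{var}(I)$ such that for each $k$, $x_{k+1}$ is a nest point—the edges containing it are totally ordered by inclusion—of the hypergraph with vertices $\mathrm{var}(I)\setminus X_k$ and edges $\{e\setminus X_k\}\setminus\{\emptyset\}$). $X_k=\{x_1,\dots,x_k\}$. For $c,d\in I$: $c\prec d$ iff there is $k$ with $\mathrm{var}(c)\setminus X_k\subsetneq\mathrm{var}(d)\setminus X_k$; $c\preceq d$ iff $c\prec d$ or $c=d$. Relations $\prec_k$ are defined inductively: $\prec_0=\emptyset$; $c\prec_{k+1}d$ iff $c\prec_k d$ or there is $e\in I$ with $c\preceq_k e\prec d$ and $x_{k+1}\in\mathrm{var}(d)\cap\mathrm{var}(e)$; here $c\preceq_k d$ iff $c=d$ or $c\prec_k d$. *)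

From mathcomp Require Import all_boot.
Set Implicit Arguments. Unset Strict Implicit. Unset Printing Implicit Defensive.

Section Defs.
(* V : variables, C : the (finite) set I of constraints, var c : scope of c. *)
Variables (V C : finType) (var : C -> {set V}) (xs : seq V).

Definition varI : {set V} := \bigcup_(c : C) var c.

Definition X (k : nat) : {set V} := [set x in take k xs].

(* x_{k+1} (= nth element of index k, 0-based) is a nest point of the
   hypergraph with vertices var(I) \ X_k and edges {e \ X_k} \ {emptyset}:
   the (nonempty, since they contain x_{k+1}) edges containing it are
   totally ordered by inclusion. *)
Definition nest_point_at (k : nat) (x : V) : Prop :=
  x \in varI :\: X k /\
  forall c d : C, x \in var c :\: X k -> x \in var d :\: X k ->
    (var c :\: X k \subset var d :\: X k) \/ (var d :\: X k \subset var c :\: X k).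

Definition beta_elim_order : Prop :=
  uniq xs /\ [set x in xs] = varI /\
  forall k, k < size xs -> forall x, onth xs k = Some x -> nest_point_at k x.

Definition prec (c d : C) : Prop :=
  exists k : nat, var c :\: X k \proper var d :\: X k.

Fixpoint precK (k : nat) : C -> C -> Prop :=
  match k with
  | 0 => fun _ _ => False
  | k'.+1 => fun c d =>
      precK k' c d \/
      exists e : C, (c = e \/ precK k' c e) /\ prec e d /\
        exists x, onth xs k' = Some x /\ x \in var d /\ x \in var e
  end.

Definition preceqK (k : nat) (c d : C) : Prop := c = d \/ precK k c d.

End Defs.

Definition partial_order (T : Type) (R : T -> T -> Prop) : Prop :=
  (forall x, R x x) /\
  (forall x y, R x y -> R y x -> x = y) /\
  (forall x y z, R x y -> R y z -> R x z).

From mathcomp Require Import all_boot.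
Set Implicit Arguments. Unset Strict Implicit. Unset Printing Implicit Defensive.

(* The residual scopes var(c) \ X_k only shrink as k grows, and an inclusion
   between two of them persists; this makes [prec] a strict order.  The one
   place where beta-acyclicity enters is the new clause of [prec_{k+1}]: both
   e and d contain the nest point x_{k+1}, so their residual scopes at k are
   comparable, and [prec e d] rules out the reverse inclusion. *)

Section Residuals.
Variables (V : finType) (xs : seq V).

Lemma subset_X i j : i <= j -> X xs i \subset X xs j.
Proof.
move=> le_ij; apply/subsetP=> x; rewrite !inE => x_i.
by rewrite -(subnKC le_ij) takeD mem_cat x_i.
Qed.

Lemma subsetD_X (A B : {set V}) i j : i <= j ->
  A :\: X xs i \subset B :\: X xs i -> A :\: X xs j \subset B :\: X xs j.
Proof.
move=> le_ij /subsetP AB; apply/subsetP=> x; rewrite !in_setD => /andP[x_j xA].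
have x_i : x \notin X xs i.
  by apply: contra x_j; apply/subsetP/subset_X.
by move: (AB x); rewrite !in_setD x_i xA x_j => /(_ isT).
Qed.

End Residuals.

Section Precedence.
Variables (V C : finType) (var : C -> {set V}) (xs : seq V).

Local Notation prec := (prec var xs).
Local Notation precK := (precK var xs).
Local Notation preceqK := (preceqK var xs).
Local Notation X := (X xs).

Lemma prec_trans c e d : prec c e -> prec e d -> prec c d.
Proof.
move=> [i ce] [j ed]; case: (leqP i j) => [le_ij | /ltnW le_ji].
- by exists j; apply: sub_proper_trans ed; apply: subsetD_X le_ij (proper_sub ce).
- by exists i; apply: proper_sub_trans ce _; apply: subsetD_X le_ji (proper_sub ed).
Qed.

Lemma prec_asym c d : prec c d -> ~ prec d c.
Proof.
have no_rev i j (A B : {set V}) : i <= j -> A :\: X i \proper B :\: X i ->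
    ~ B :\: X j \proper A :\: X j.
  by move=> le_ij /proper_sub /(subsetD_X le_ij) AB; rewrite properE AB andbF.
move=> [i cd] [j dc]; case: (leqP i j) => [le_ij | /ltnW le_ji].
- exact: no_rev le_ij cd dc.
- exact: no_rev le_ji dc cd.
Qed.

Hypothesis order : beta_elim_order var xs.

Lemma nest_point_onth k x : onth xs k = Some x -> nest_point_at var xs k x.
Proof.
move=> xk; have [_ [_ nest]] := order.
have k_lt : k < size xs by rewrite -onthTE xk.
exact: nest k_lt x xk.
Qed.

Lemma onth_notin_X k x : onth xs k = Some x -> x \notin X k.
Proof. by move=> /nest_point_onth [+ _]; rewrite in_setD => /andP[]. Qed.

Lemma prec_nest_point_subset k x e d : onth xs k = Some x ->
  x \in var e -> x \in var d -> prec e d -> var e :\: X k \subset var d :\: X k.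
Proof.
move=> xk xe xd [j ed]; have x_k := onth_notin_X xk.
case: (leqP j k) => [le_jk | /ltnW le_kj]; first exact: subsetD_X le_jk (proper_sub ed).
have [_ comparable] := nest_point_onth xk.
case: (comparable e d); rewrite ?in_setD ?x_k ?xe ?xd // => de.
by move: ed; rewrite properE (subsetD_X le_kj de) andbF.
Qed.

Lemma precKS_step k :
  (forall c d, precK k c d -> prec c d /\ var c :\: X k \subset var d :\: X k) ->
  forall c d, precK k.+1 c d -> prec c d /\ var c :\: X k \subset var d :\: X k.
Proof.
move=> precK_sub c d [/precK_sub // | [e [ce [ed [x [xk [xd xe]]]]]]].
have sub_ed := prec_nest_point_subset xk xe xd ed.
case: ce => [-> // | /precK_sub [ce sub_ce]].
by split; [apply: prec_trans ed | apply: subset_trans sub_ed].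
Qed.

Lemma precK_prec_subset k c d :
  precK k c d -> prec c d /\ var c :\: X k \subset var d :\: X k.
Proof.
elim: k c d => [// | k IHk] c d /(precKS_step IHk) [cd sub_cd].
by split=> //; apply: subsetD_X (leqnSn k) sub_cd.
Qed.

Lemma precKS_prec_subset k c d :
  precK k.+1 c d -> prec c d /\ var c :\: X k \subset var d :\: X k.
Proof. by move/(precKS_step (@precK_prec_subset k)). Qed.

Lemma precK_prec k c d : precK k c d -> prec c d.
Proof. by move/precK_prec_subset=> []. Qed.

Lemma preceqK_prec_trans k c e d : preceqK k c e -> prec e d -> prec c d.
Proof. by move=> [-> // | /precK_prec]; apply: prec_trans. Qed.

Lemma precK_trans k c d e : precK k c d -> precK k d e -> precK k c e.
Proof.
elim: k c d e => [// | k IHk] c d e.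
case=> [cd | [f [cf [fd [x [xk [xd xf]]]]]]];
  case=> [de | [g [dg [ge [y [yk [ye yg]]]]]]].
- by left; apply: IHk cd de.
- right; exists g; split; last by split=> //; exists y.
  by right; case: dg => [<- // | dg]; apply: IHk cd dg.
- right; exists f; split=> //; split; first exact: prec_trans fd (precK_prec de).
  exists x; split=> //; split=> //.
  have [_ /subsetP sub_de] := precK_prec_subset de.
  by have := sub_de x; rewrite !in_setD (onth_notin_X xk) xd => /(_ isT) /andP[].
- move: yk ye; rewrite xk => -[<-] xe.
  right; exists f; split=> //; split; last by exists x.
  exact: prec_trans fd (preceqK_prec_trans dg ge).
Qed.

Lemma preceqK_partial_order k : partial_order (preceqK k).
Proof.
split; first by left.
split.
  move=> c d [// | cd] [<- // | dc].
  by case: (prec_asym (precK_prec cd) (precK_prec dc)).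
move=> c d e [<- // | cd] [<- | de]; first by right.
by right; apply: precK_trans cd de.
Qed.

End Precedence.

Theorem lemma4 (V C : finType) (var : C -> {set V}) (xs : seq V)
  (Hinj : injective var) (Helim : beta_elim_order var xs) :
  (forall k, k < size xs ->
     (forall c d, precK var xs k c d -> precK var xs k.+1 c d) /\
     (forall c d, precK var xs k.+1 c d ->
        prec var xs c d /\ var c :\: X xs k \subset var d :\: X xs k)) /\
  (forall k, k <= size xs -> partial_order (preceqK var xs k)).
Proof.
split=> k _; last exact: preceqK_partial_order.
split=> [c d cd | ]; [by left | exact: precKS_prec_subset].
Qed.
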